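(* Let $X$ be a real Hilbert space, $A,B\colon X\rightrightarrows X$ maximally monotone, $T:=\operatorname{Id}-J_A+J_BR_A$, $v:=P_{\overline{\operatorname{ran}}(\operatorname{Id}-T)}(0)$, $D:=\operatorname{dom}A-\operatorname{dom}B$, $R:=\operatorname{ran}A+\operatorname{ran}B$, $v_D:=P_{\overline D}(0)$, $v_R:=P_{\overline R}(0)$, and assume $\overline{\operatorname{ran}}(\operatorname{Id}-T)=\overline{D\cap R}=\overline D\cap\overline R$. Suppose $v_R=0$, that $f\in X$ satisfies $f=v+Tf$, and let $x\in X$. Then (i) for all $n\in\mathbb N$, $J_AT^nf=J_A(f-nv_D)=J_Af$; (ii) $(J_AT^nx)_{n\in\mathbb N}$ is bounded; (iii) $(J_BR_AT^nx)_{n\in\mathbb N}$ is bounded.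
   Context: $J_C:=(\operatorname{Id}+C)^{-1}$, $R_C:=2J_C-\operatorname{Id}$ for maximally monotone $C$; $P_S$ is the projection onto a nonempty closed convex set $S$. *)

From HB Require Import structures.
From mathcomp Require Import all_boot all_order all_algebra.
From mathcomp Require Import all_classical all_reals all_analysis.
Set Implicit Arguments. Unset Strict Implicit. Unset Printing Implicit Defensive.
Import Order.TTheory GRing.Theory Num.Theory.
Import numFieldNormedType.Exports.
Local Open Scope classical_set_scope.
Local Open Scope ring_scope.

(* A real Hilbert space is a complete normed space X over R whose norm comes
   from an inner product ip: ip symmetric, linear in the first argument, and
   ||x||^2 = <x,x>. *)
Definition is_inner_product {R : realType} {X : normedModType R}
  (ip : X -> X -> R) : Prop :=
  [/\ forall x y, ip x y = ip y x,
      forall (a : R) (x y z : X), ip (a *: x + y) z = a * ip x z + ip y z &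
      forall x, `|x| ^+ 2 = ip x x].

Section Operators.
Context {R : realType} {X : normedModType R}.

(* Set-valued operators X ⇉ X are relations: (A x) is the set of images of x. *)
Definition monotone_op (ip : X -> X -> R) (A : X -> set X) : Prop :=
  forall x u y w, A x u -> A y w -> 0 <= ip (x - y) (u - w).

Definition maximally_monotone (ip : X -> X -> R) (A : X -> set X) : Prop :=
  monotone_op ip A /\
  forall x u, (forall y w, A y w -> 0 <= ip (x - y) (u - w)) -> A x u.

Definition dom_op (A : X -> set X) : set X := [set x | exists u, A x u].
Definition ran_op (A : X -> set X) : set X := [set u | exists x, A x u].

Definition set_add (S1 S2 : set X) : set X :=
  [set z | exists a b, S1 a /\ S2 b /\ z = a + b].
Definition set_sub (S1 S2 : set X) : set X :=
  [set z | exists a b, S1 a /\ S2 b /\ z = a - b].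

(* Resolvent J_A := (Id + A)^{-1}: J_A x is the point p with x ∈ p + A p
   (unique and existing for maximally monotone A by Minty). *)
Definition resolvent (A : X -> set X) (x : X) : X :=
  get [set p | A p (x - p)].

Definition reflected_resolvent (A : X -> set X) (x : X) : X :=
  2%:R *: resolvent A x - x.

Definition nearest_proj (S : set X) (x : X) : X :=
  get [set p | S p /\ forall y, S y -> `|x - p| <= `|x - y|].

Definition DR_op (A B : X -> set X) (x : X) : X :=
  x - resolvent A x + resolvent B (reflected_resolvent A x).

End Operators.

(* Minty's theorem, obtained by minimising c + (|x|^2 + |u|^2)/2 over the epigraph
   of the Fitzpatrick function of A, makes J_A and J_B total and firmly nonexpansive and
   shows that dom A and ran A are nearly convex; hence so are D and R, and v_D is
   characterised by <v_D, y - v_D> >= 0 on the closure of D.  This bounds <z, v_D> above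
   on dom B, which pushes ran B + v_D into the closure of ran B; since 0 lies in the
   closure of R, so does v_D, whence v = v_D.  Firm nonexpansiveness of T and the
   minimality of |v| among the displacements y - T y turn T f = f - v into
   T^n f = f - n v, and the variational inequality keeps (J_A f, f - J_A f - n v) in
   gra A, so J_A is constant along the orbit of f; (ii) and (iii) follow by
   nonexpansiveness of T, J_A and J_B R_A. *)

From HB Require Import structures.
From mathcomp Require Import all_boot all_order all_algebra.
From mathcomp Require Import all_classical all_reals all_analysis.
From mathcomp Require Import lra ring.
Import Order.TTheory GRing.Theory Num.Theory.
Import numFieldNormedType.Exports.
Local Open Scope classical_set_scope.
Local Open Scope ring_scope.

Set Implicit Arguments. Unset Strict Implicit.

Lemma subrBB (V : zmodType) (a b c d : V) : a - b - (c - d) = (a - c) - (b - d).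
Proof. by rewrite !opprB addrACA [RHS]addrACA (addrC (- b)). Qed.

Section OrderedFieldFacts.
Variable R : realFieldType.

Lemma linear_coef_ge0 (a b : R) : 0 <= b ->
  (forall t, 0 < t -> t <= 1 -> 0 <= t * a + t ^+ 2 * b) -> 0 <= a.
Proof.
move=> b0 H; rewrite leNgt; apply/negP => a0.
have d0 : 0 < b - a by lra.
set t := - a / (b - a).
have t0 : 0 < t by rewrite /t divr_gt0 // oppr_gt0.
have t1 : t <= 1 by rewrite /t ler_pdivrMr // mul1r; lra.
have := H t t0 t1.
have -> : t * a + t ^+ 2 * b = - t * (a ^+ 2 / (b - a)) by rewrite /t; field; lra.
have : 0 < t * (a ^+ 2 / (b - a)) by rewrite mulr_gt0 // divr_gt0 // exprn_even_gt0 //= lt_eqF.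
rewrite mulNr; lra.
Qed.

Lemma lt_of_quadratic_le (lam a W K eps : R) : 0 < eps -> 0 <= a -> 0 <= W ->
  lam * eps = W + `|K| / eps + 1 -> lam * a ^+ 2 <= a * W + K -> a < eps.
Proof.
move=> e0 a0 W0 lamE h; rewrite ltNge; apply/negP => ea.
have lam0 : 0 <= lam.
  by rewrite -(pmulr_lge0 _ e0) lamE; have := divr_ge0 (normr_ge0 K) (ltW e0); lra.
have h1 : lam * eps * a <= lam * a ^+ 2.
  by rewrite expr2 mulrA ler_wpM2r // ler_wpM2l.
have h2 : `|K| <= `|K| / eps * a.
  rewrite -{1}(divfK (lt0r_neq0 e0) `|K|); apply: ler_wpM2l => //.
  by rewrite divr_ge0 // ltW.
by rewrite lamE in h1; have := ler_norm K; lra.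
Qed.

End OrderedFieldFacts.

Section RealFacts.
Variable R : realType.

Definition epsn (k : nat) : R := k.+1%:R^-1.

Lemma epsn_gt0 k : 0 < epsn k.
Proof. by rewrite /epsn invr_gt0 ltr0Sn. Qed.

Lemma epsn_le1 k : epsn k <= 1.
Proof. by rewrite /epsn invf_le1 ?ltr0Sn // ler1n. Qed.

Lemma epsn_small (e : R) : 0 < e -> exists N, forall k, (N <= k)%N -> epsn k < e.
Proof.
move=> e0; have [N _ HN] := near_infty_natSinv_lt (PosNum e0).
by exists N => k Nk; apply: HN.
Qed.

Lemma inf_image_le {T} (P : set T) (g : T -> R) t :
  (forall t, P t -> 0 <= g t) -> P t -> inf (g @` P) <= g t.
Proof. by move=> g0 Pt; apply: ge_inf; [exists 0 => _ [s Ps <-]; apply: g0 | exists t]. Qed.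

Lemma inf_image_seq {T} (P : set T) (g : T -> R) : P !=set0 ->
  (forall t, P t -> 0 <= g t) ->
  exists s : nat -> T, forall k, P (s k) /\ g (s k) < inf (g @` P) + epsn k.
Proof.
move=> [t0 Pt0] g0.
have hinf : has_inf (g @` P) by split; [exists (g t0), t0 | exists 0 => _ [s Ps <-]; apply: g0].
suff /choice[s Hs] : forall k, exists t, P t /\ g t < inf (g @` P) + epsn k by exists s.
move=> k; have [_ [t Pt <-] Hr] := inf_adherent (epsn_gt0 k) hinf.
by exists t.
Qed.

End RealFacts.

Section Closure.
Variables (R : realType) (X : normedModType R).

Lemma closure_normP (S : set X) x :
  closure S x <-> forall e : R, 0 < e -> exists s, S s /\ `|x - s| < e.
Proof.
split.
- move=> clx e e0; have [s [Ss]] := clx (ball x e) (nbhsx_ballx x e e0).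
  by rewrite -ball_normE; exists s.
- move=> H B /nbhs_ballP [e /= e0 sub].
  have [s [Ss xs]] := H e e0; exists s; split => //.
  by apply: sub; rewrite -ball_normE.
Qed.

Lemma closure_set_add (S1 S2 : set X) c1 c2 : closure S1 c1 -> closure S2 c2 ->
  closure (set_add S1 S2) (c1 + c2).
Proof.
move=> /closure_normP h1 /closure_normP h2; apply/closure_normP => e e0.
have e2 : 0 < e / 2 by rewrite divr_gt0.
have [s1 [S1s hs1]] := h1 _ e2; have [s2 [S2s hs2]] := h2 _ e2.
exists (s1 + s2); split; first by exists s1, s2.
rewrite opprD addrACA; apply: (le_lt_trans (ler_normD _ _)); lra.
Qed.

Lemma closure_set_sub (S1 S2 : set X) c1 c2 : closure S1 c1 -> closure S2 c2 ->
  closure (set_sub S1 S2) (c1 - c2).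
Proof.
move=> /closure_normP h1 /closure_normP h2; apply/closure_normP => e e0.
have e2 : 0 < e / 2 by rewrite divr_gt0.
have [s1 [S1s hs1]] := h1 _ e2; have [s2 [S2s hs2]] := h2 _ e2.
exists (s1 - s2); split; first by exists s1, s2.
by rewrite subrBB; apply: (le_lt_trans (ler_normB _ _)); lra.
Qed.

Lemma closure_addr (S : set X) k c : (forall s, S s -> closure S (s + k)) ->
  closure S c -> closure S (c + k).
Proof.
move=> Sk /closure_normP hc; apply/closure_normP => e e0.
have e2 : 0 < e / 2 by rewrite divr_gt0.
have [s [Ss hs]] := hc _ e2; have [s' [Ss' hs']] := (closure_normP _ _).1 (Sk s Ss) _ e2.
exists s'; split => //.
have -> : c + k - s' = (c - s) + (s + k - s') by rewrite !addrA subrK.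
by apply: (le_lt_trans (ler_normD _ _)); lra.
Qed.

End Closure.

Section InnerProduct.
Variables (R : realType) (X : normedModType R) (ip : X -> X -> R).
Hypothesis Hip : is_inner_product ip.

Lemma ipC x y : ip x y = ip y x. Proof. by case: Hip. Qed.
Lemma ipxx x : ip x x = `|x| ^+ 2. Proof. by case: Hip. Qed.
Lemma ipZlDl a x y z : ip (a *: x + y) z = a * ip x z + ip y z. Proof. by case: Hip. Qed.

Lemma ip0l z : ip 0 z = 0.
Proof. by have := ipZlDl 1 0 0 z; rewrite scaler0 addr0 mul1r; lra. Qed.
Lemma ipDl x y z : ip (x + y) z = ip x z + ip y z.
Proof. by rewrite -[x in LHS]scale1r ipZlDl mul1r. Qed.
Lemma ipZl a x z : ip (a *: x) z = a * ip x z.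
Proof. by rewrite -[_ *: _]addr0 ipZlDl ip0l addr0. Qed.
Lemma ipNl x z : ip (- x) z = - ip x z.
Proof. by rewrite -scaleN1r ipZl mulN1r. Qed.
Lemma ipBl x y z : ip (x - y) z = ip x z - ip y z.
Proof. by rewrite ipDl ipNl. Qed.
Lemma ip0r z : ip z 0 = 0. Proof. by rewrite ipC ip0l. Qed.
Lemma ipDr x y z : ip z (x + y) = ip z x + ip z y.
Proof. by rewrite ipC ipDl !(ipC z). Qed.
Lemma ipZr a x z : ip z (a *: x) = a * ip z x.
Proof. by rewrite ipC ipZl ipC. Qed.
Lemma ipNr x z : ip z (- x) = - ip z x.
Proof. by rewrite ipC ipNl ipC. Qed.
Lemma ipBr x y z : ip z (x - y) = ip z x - ip z y.
Proof. by rewrite ipDr ipNr. Qed.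

Definition ipE := (ipDl, ipDr, ipBl, ipBr, ipNl, ipNr, ipZl, ipZr, ip0l, ip0r).

Lemma normD_sqr x y : `|x + y| ^+ 2 = `|x| ^+ 2 + 2 * ip x y + `|y| ^+ 2.
Proof. by rewrite -!ipxx !ipE (ipC y x); lra. Qed.

Lemma ip_le_sqr_half x y : 2 * ip x y <= `|x| ^+ 2 + `|y| ^+ 2.
Proof. by have := normD_sqr x (- y); rewrite ipNr normrN; have := sqr_ge0 `|x - y|; lra. Qed.

Lemma ip_le_norm_mul x y : ip x y <= `|x| * `|y|.
Proof.
have [->|xn0] := eqVneq x 0; first by rewrite ip0l normr0 mul0r.
have [->|yn0] := eqVneq y 0; first by rewrite ip0r normr0 mulr0.
have p : 0 < `|x| * `|y| by rewrite mulr_gt0 // normr_gt0.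
(* Young's inequality applied to |y| x and |x| y *)
have := ip_le_sqr_half (`|y| *: x) (`|x| *: y).
rewrite !ipE !normrZ !normr_id !exprMn => H.
suff : `|x| * `|y| * (2 * ip x y) <= `|x| * `|y| * (2 * (`|x| * `|y|)).
  by rewrite ler_pM2l //; lra.
by nra.
Qed.

Lemma ip_ge0_of_norm_le_shift p d : (forall t, 0 < t -> t <= 1 -> `|p| <= `|p + t *: d|) ->
  0 <= ip p d.
Proof.
move=> H; suff : 0 <= 2 * ip p d by lra.
apply: (linear_coef_ge0 (sqr_ge0 `|d|)) => t t0 t1.
have : `|p| ^+ 2 <= `|p + t *: d| ^+ 2 by rewrite ler_pXn2r ?nnegrE ?H.
by rewrite normD_sqr ipZr normrZ exprMn gtr0_norm; lra.
Qed.

Lemma DR_combination_le u w d : `|u| ^+ 2 <= ip u d -> `|w| ^+ 2 <= ip w (2%:R *: u - d) ->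
  `|d - u + w| ^+ 2 + `|u - w| ^+ 2 <= `|d| ^+ 2.
Proof. by rewrite -!ipxx !ipE (ipC w u) (ipC d u) (ipC d w); lra. Qed.

End InnerProduct.

Section NearlyConvex.
Variables (R : realType) (X : normedModType R).

Definition nearly_convex (S : set X) := forall a b (t : R), S a -> S b -> 0 <= t <= 1 ->
  closure S ((1 - t) *: a + t *: b).

Lemma nearly_convex_closure (S : set X) : nearly_convex S -> forall a b (t : R),
  closure S a -> closure S b -> 0 <= t <= 1 -> closure S ((1 - t) *: a + t *: b).
Proof.
move=> HS a b t /closure_normP ca /closure_normP cb t01; apply/closure_normP => e e0.
have e3 : 0 < e / 3 by rewrite divr_gt0.
have [a' [Sa' ha]] := ca _ e3; have [b' [Sb' hb]] := cb _ e3.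
have [s [Ss hs]] := (closure_normP _ _).1 (HS a' b' t Sa' Sb' t01) _ e3.
exists s; split => //; move: t01 => /andP[t0 t1].
rewrite -(subrKA ((1 - t) *: a' + t *: b')).
have -> : (1 - t) *: a + t *: b - ((1 - t) *: a' + t *: b') =
    (1 - t) *: (a - a') + t *: (b - b') by rewrite !scalerBr opprD addrACA.
have hu : `|(1 - t) *: (a - a') + t *: (b - b')| <= (1 - t) * `|a - a'| + t * `|b - b'|.
  by apply: le_trans (ler_normD _ _) _; rewrite !normrZ !ger0_norm ?subr_ge0.
apply: le_lt_trans (ler_normD _ _) _.
have : (1 - t) * `|a - a'| <= (1 - t) * (e / 3) by rewrite ler_wpM2l ?subr_ge0 ?(ltW ha).
have : t * `|b - b'| <= t * (e / 3) by rewrite ler_wpM2l ?(ltW hb).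
lra.
Qed.

Lemma nearly_convex_set_add (S1 S2 : set X) :
  nearly_convex S1 -> nearly_convex S2 -> nearly_convex (set_add S1 S2).
Proof.
move=> H1 H2 a b t [a1 [a2 [h1 [h2 ->]]]] [b1 [b2 [k1 [k2 ->]]]] t01.
rewrite !scalerDr addrACA.
exact: closure_set_add (H1 _ _ _ h1 k1 t01) (H2 _ _ _ h2 k2 t01).
Qed.

Lemma nearly_convex_set_sub (S1 S2 : set X) :
  nearly_convex S1 -> nearly_convex S2 -> nearly_convex (set_sub S1 S2).
Proof.
move=> H1 H2 a b t [a1 [a2 [h1 [h2 ->]]]] [b1 [b2 [k1 [k2 ->]]]] t01.
rewrite !scalerBr addrACA -opprD.
exact: closure_set_sub (H1 _ _ _ h1 k1 t01) (H2 _ _ _ h2 k2 t01).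
Qed.

Variable ip : X -> X -> R.
Hypothesis Hip : is_inner_product ip.

Definition min_norm_in (C : set X) p := C p /\ forall y, C y -> `|p| <= `|y|.

Lemma nearest_proj0_min_norm (C : set X) p : min_norm_in C p -> min_norm_in C (nearest_proj C 0).
Proof.
move=> [Cp Hp].
have /getPex[] : exists q, C q /\ forall y, C y -> `|0 - q| <= `|0 - y|.
  by exists p; split => // y Cy; rewrite !sub0r !normrN Hp.
by move=> Cq Hq; split => // y Cy; have := Hq y Cy; rewrite !sub0r !normrN.
Qed.

Lemma min_norm_ip_ge0 (S : set X) p : nearly_convex S -> min_norm_in (closure S) p ->
  forall y, closure S y -> 0 <= ip p (y - p).
Proof.
move=> HS [cp Hp] y cy; apply: ip_ge0_of_norm_le_shift => // t t0 t1.
have -> : p + t *: (y - p) = (1 - t) *: p + t *: y.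
  by rewrite scalerBl scale1r scalerBr addrAC addrA.
by apply/Hp/nearly_convex_closure => //; rewrite ltW.
Qed.

Lemma min_norm_unique (S : set X) p q : nearly_convex S -> min_norm_in (closure S) p ->
  closure S q -> `|q| <= `|p| -> q = p.
Proof.
move=> HS mp cq qp; have := min_norm_ip_ge0 HS mp cq.
have := normD_sqr Hip q (- p); rewrite (ipNr Hip) normrN (ipBr Hip) (ipxx Hip) (ipC Hip p q).
have pq : `|q| ^+ 2 <= `|p| ^+ 2 by rewrite ler_pXn2r ?nnegrE.
move=> h1 h2; apply/eqP; rewrite -subr_eq0 -normr_eq0 -sqrf_eq0 eq_le sqr_ge0 andbT.
lra.
Qed.

End NearlyConvex.

Section Completeness.
Variables (R : realType) (X : completeNormedModType R).

Lemma cvg_of_sqr_dist_le (C : R) (s : nat -> X) : 0 < C ->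
  (forall k j, `|s k - s j| ^+ 2 <= C * (epsn R k + epsn R j)) -> exists l : X, s @ \oo --> l.
Proof.
move=> C0 Hs; suff /cvg_ex[l sl] : cvg (s @ \oo) by exists l.
apply: cauchy_cvg; apply: cauchy_exP => e e0.
have [N HN] := epsn_small (divr_gt0 (exprn_gt0 2 e0) (mulr_gt0 (ltr0Sn _ 1) C0)).
exists (s N), N => // n /= Nn; rewrite -ball_normE /ball_ /=.
rewrite -(ltr_pXn2r (n := 2)) ?nnegrE ?(ltW e0) //.
have := HN N (leqnn N); have := HN n Nn; rewrite !ltr_pdivlMr ?mulr_gt0 //.
by have := Hs N n; move: (epsn R N) (epsn R n) => eN en; nra.
Qed.

Variable ip : X -> X -> R.
Hypothesis Hip : is_inner_product ip.

Lemma min_norm_exists (S : set X) : S !=set0 -> nearly_convex S ->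
  exists p, min_norm_in (closure S) p.
Proof.
move=> S0 HS; set m := inf ((@Num.norm _ X) @` S).
have [s Hs] := inf_image_seq S0 (fun y _ => normr_ge0 y).
have m_le y : closure S y -> m <= `|y|.
  move=> /closure_normP cy; apply/ler_addgt0Pr => e e0.
  have [z [Sz hz]] := cy e e0; have := inf_image_le (fun y _ => normr_ge0 y) Sz.
  by have := ler_normB y (y - z); rewrite opprB addrC subrK -/m; lra.
have m0 : 0 <= m.
  by apply: lb_le_inf => [|_ [y _ <-]] //; have [y Sy] := S0; exists `|y|, y.
have [p /cvgrPdist_lt Hp] : exists p : X, s @ \oo --> p.
  apply: (@cvg_of_sqr_dist_le (4 * m + 2)) => [|k j]; first lra.
  (* parallelogram law: the midpoint of s k and s j has norm at least m *)
  have half : 0 <= (2^-1 : R) <= 1 by apply/andP; split; lra.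
  have := m_le _ (nearly_convex_closure HS (subset_closure (Hs k).1)
    (subset_closure (Hs j).1) half).
  have : `|s k - s j| ^+ 2 + 4 * `|(1 - 2^-1) *: s k + 2^-1 *: s j| ^+ 2 =
         2 * `|s k| ^+ 2 + 2 * `|s j| ^+ 2.
    by rewrite -!(ipxx Hip) !(ipE Hip) (ipC Hip (s j) (s k)); lra.
  have := (Hs k).2; have := (Hs j).2.
  have := normr_ge0 (s k); have := normr_ge0 (s j).
  have := epsn_le1 R k; have := epsn_le1 R j; have := epsn_gt0 R k; have := epsn_gt0 R j.
  move: (epsn R k) (epsn R j) => ek ej; nra.
exists p; split.
- apply/closure_normP => e e0; have [N _ HN] := Hp e e0.
  by exists (s N); split; [exact: (Hs N).1 | apply: HN => /=].
- move=> y cy; apply: le_trans (m_le y cy); apply/ler_addgt0Pr => e e0.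
  have e2 : 0 < e / 2 by rewrite divr_gt0.
  have [N1 _ H1] := Hp _ e2; have [N2 H2] := epsn_small e2.
  have := H1 _ (leq_maxl N1 N2); have := H2 _ (leq_maxr N1 N2); have := (Hs (maxn N1 N2)).2.
  have := ler_normD (s (maxn N1 N2)) (p - s (maxn N1 N2)); rewrite addrC subrK.
  by move: (epsn _ _) => ee; lra.
Qed.

Lemma min_norm_nearest_proj0 (S : set X) : S !=set0 -> nearly_convex S ->
  min_norm_in (closure S) (nearest_proj (closure S) 0).
Proof. by move=> S0 HS; have [p /nearest_proj0_min_norm] := min_norm_exists S0 HS. Qed.

End Completeness.

Section Minty.
Variables (R : realType) (X : completeNormedModType R) (ip : X -> X -> R).
Hypothesis Hip : is_inner_product ip.
Variable A : X -> set X.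
Hypothesis HA : maximally_monotone ip A.

Lemma monotoneP x u y w : A x u -> A y w -> 0 <= ip (x - y) (u - w).
Proof. by case: HA => mon _; apply: mon. Qed.

Lemma maximalP x u : (forall y w, A y w -> 0 <= ip (x - y) (u - w)) -> A x u.
Proof. by case: HA => _; apply. Qed.

Lemma graph_neq0 : exists y w, A y w.
Proof.
apply/not_existsP => A0; apply: (A0 0); exists 0.
by apply: maximalP => y w Ayw; case: (A0 y); exists w.
Qed.

(* [fitz_le x u c] says that the Fitzpatrick function of A is at most c at (x, u). *)
Definition fitz_le x u (c : R) := forall y w, A y w -> ip x w + ip y u - ip y w <= c.

Lemma fitz_le_ip x u c : fitz_le x u c -> ip x u <= c.
Proof.
move=> H; rewrite leNgt; apply/negP => cx.
have Axu : A x u by apply: maximalP => y w /H; rewrite !(ipE Hip); lra.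
by have := H x u Axu; lra.
Qed.

Lemma fitz_le_graph y w : A y w -> fitz_le y w (ip y w).
Proof. by move=> Ayw y' w' /(monotoneP Ayw); rewrite !(ipE Hip); lra. Qed.

Lemma fitz_le_conv x u c x' u' c' (t : R) : fitz_le x u c -> fitz_le x' u' c' -> 0 <= t <= 1 ->
  fitz_le (x + t *: (x' - x)) (u + t *: (u' - u)) (c + t * (c' - c)).
Proof.
move=> H H' /andP[t0 t1] y w Ayw; have := H y w Ayw; have := H' y w Ayw.
by rewrite !(ipE Hip); nra.
Qed.

Let energy (x u : X) (c : R) : R := c + (`|x| ^+ 2 + `|u| ^+ 2) / 2.

Lemma fitz_le_energy_ge0 x u c : fitz_le x u c -> 0 <= energy x u c.
Proof.
move=> /fitz_le_ip; rewrite /energy; have := normD_sqr Hip x u.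
by have := sqr_ge0 `|x + u|; lra.
Qed.

Lemma fitz_le_limit (xs us : nat -> X) (cs : nat -> R) (m : R) xb ub :
  (forall k, fitz_le (xs k) (us k) (cs k)) ->
  (forall k, energy (xs k) (us k) (cs k) < m + epsn R k) ->
  xs @ \oo --> xb -> us @ \oo --> ub ->
  fitz_le xb ub (m - (`|xb| ^+ 2 + `|ub| ^+ 2) / 2).
Proof.
move=> Hs Hm /cvgrPdist_lt Hx /cvgrPdist_lt Hu y w Ayw; apply/ler_addgt0Pr => e e0.
set C := `|xb| + `|ub| + `|w| + `|y| + 1.
have C0 : 0 < C by rewrite /C; have := normr_ge0 xb; have := normr_ge0 ub;
  have := normr_ge0 w; have := normr_ge0 y; lra.
set d := Num.min 1 (e / (2 * C)).
have d0 : 0 < d by rewrite lt_min ltr01 /= divr_gt0 // mulr_gt0.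
have Cd : C * d <= e / 2.
  have -> : e / 2 = C * (e / (2 * C)) by field; lra.
  by rewrite ler_wpM2l ?(ltW C0) // ge_min lexx orbT.
have [N1 _ H1] := Hx _ d0; have [N2 _ H2] := Hu _ d0.
have [N3 H3] := epsn_small (divr_gt0 e0 (ltr0Sn _ 1)).
pose k := maxn N1 (maxn N2 N3).
have /H1 /= hx : (N1 <= k)%N by rewrite leq_maxl.
have /H2 /= hu : (N2 <= k)%N by rewrite (leq_trans _ (leq_maxr _ _)) // leq_maxl.
have /H3 hk : (N3 <= k)%N by rewrite (leq_trans _ (leq_maxr _ _)) // leq_maxr.
move: (Hs k y w Ayw) (Hm k); rewrite /energy.
have ex : xs k = xb - (xb - xs k) by rewrite opprB addrC subrK.
have eu : us k = ub - (ub - us k) by rewrite opprB addrC subrK.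
move: (xb - xs k) (ub - us k) hx hu ex eu => dx du hx hu -> -> hl hm.
rewrite !(ipE Hip) in hl.
have nx := normD_sqr Hip xb (- dx); have nu := normD_sqr Hip ub (- du).
rewrite !(ipNr Hip) !normrN in nx nu.
have c1 := ip_le_norm_mul Hip xb dx; have c2 := ip_le_norm_mul Hip ub du.
have c3 := ip_le_norm_mul Hip dx w; have c4 := ip_le_norm_mul Hip y du.
have b1 : `|xb| * `|dx| <= `|xb| * d by rewrite ler_wpM2l ?(ltW hx).
have b2 : `|ub| * `|du| <= `|ub| * d by rewrite ler_wpM2l ?(ltW hu).
have b3 : `|dx| * `|w| <= d * `|w| by rewrite ler_wpM2r ?(ltW hx).
have b4 : `|y| * `|du| <= `|y| * d by rewrite ler_wpM2l ?(ltW hu).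
have := sqr_ge0 `|dx|; have := sqr_ge0 `|du|.
by move: Cd; rewrite /C; nra.
Qed.

Lemma fitz_energy_min_exists : exists xb ub cb, fitz_le xb ub cb /\
  forall x u c, fitz_le x u c -> energy xb ub cb <= energy x u c.
Proof.
pose P := [set t : X * X * R | fitz_le t.1.1 t.1.2 t.2].
pose g (t : X * X * R) := energy t.1.1 t.1.2 t.2.
have g0 t : P t -> 0 <= g t by apply: fitz_le_energy_ge0.
have P0 : P !=set0 by have [y [w /fitz_le_graph Ayw]] := graph_neq0; exists (y, w, ip y w).
have [s Hs] := inf_image_seq P0 g0; set m := inf (g @` P) in Hs.
have m_le x u c : fitz_le x u c -> m <= energy x u c.
  by move=> h; apply: (inf_image_le (t := (x, u, c))) g0 h.
pose xs k := (s k).1.1; pose us k := (s k).1.2; pose cs k := (s k).2.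
(* the energy is strongly convex in (x, u), so midpoints control the distances *)
have dist_le k j : `|xs k - xs j| ^+ 2 + `|us k - us j| ^+ 2 <= 4 * (epsn R k + epsn R j).
  have half : 0 <= (2^-1 : R) <= 1 by apply/andP; split; lra.
  have := m_le _ _ _ (fitz_le_conv (Hs k).1 (Hs j).1 half).
  have := (Hs k).2; have := (Hs j).2; rewrite /g /energy -/(xs k) -/(us k) -/(cs k).
  rewrite -/(xs j) -/(us j) -/(cs j) -!(ipxx Hip) !(ipE Hip).
  by rewrite (ipC Hip (xs j) (xs k)) (ipC Hip (us j) (us k)); lra.
have [xb cx] : exists xb : X, xs @ \oo --> xb.
  apply: (@cvg_of_sqr_dist_le _ _ 4) => // k j.
  by have := dist_le k j; have := sqr_ge0 `|us k - us j|; lra.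
have [ub cu] : exists ub : X, us @ \oo --> ub.
  apply: (@cvg_of_sqr_dist_le _ _ 4) => // k j.
  by have := dist_le k j; have := sqr_ge0 `|xs k - xs j|; lra.
exists xb, ub, (m - (`|xb| ^+ 2 + `|ub| ^+ 2) / 2); split.
  by apply: (fitz_le_limit (cs := cs)) cx cu => k; [exact: (Hs k).1 | exact: (Hs k).2].
by move=> x u c /m_le; rewrite /energy; lra.
Qed.

Lemma minty_zero : exists p, A p (- p).
Proof.
have [xb [ub [cb [fb minb]]]] := fitz_energy_min_exists.
(* first-order optimality of (xb, ub, cb) along the segment towards (y, w, <y, w>) *)
have opt y w : A y w -> `|xb + ub| ^+ 2 <= ip (y + ub) (w + xb).
  move=> Ayw.
  have lin : 0 <= ip y w - cb + ip xb (y - xb) + ip ub (w - ub).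
    apply: (linear_coef_ge0 (b := (`|y - xb| ^+ 2 + `|w - ub| ^+ 2) / 2)).
      by have := sqr_ge0 `|y - xb|; have := sqr_ge0 `|w - ub|; lra.
    move=> t t0 t1; have t01 : 0 <= t <= 1 by rewrite ltW.
    have := minb _ _ _ (fitz_le_conv fb (fitz_le_graph Ayw) t01).
    rewrite /energy (normD_sqr Hip xb) (normD_sqr Hip ub) !(ipZr Hip) !normrZ !exprMn.
    by rewrite gtr0_norm //; lra.
  have := fitz_le_ip fb; have := normD_sqr Hip xb ub.
  move: lin; rewrite -!(ipxx Hip) !(ipE Hip) (ipC Hip y xb) (ipC Hip ub xb); lra.
have Aopp : A (- ub) (- xb).
  apply: maximalP => y w /opt; rewrite -!opprD (ipNl Hip) (ipNr Hip) opprK.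
  by rewrite (addrC ub y) (addrC xb w); have := sqr_ge0 `|xb + ub|; lra.
have := opt _ _ Aopp; rewrite !addNr (ip0l Hip) => h.
have xbE : xb = - ub by apply/eqP; rewrite -addr_eq0 -normr_eq0 -sqrf_eq0 eq_le h sqr_ge0.
by exists (- ub); move: Aopp; rewrite xbE.
Qed.

End Minty.

Section Resolvent.
Variables (R : realType) (X : completeNormedModType R) (ip : X -> X -> R).
Hypothesis Hip : is_inner_product ip.
Variable A : X -> set X.
Hypothesis HA : maximally_monotone ip A.

Lemma minty_shift (mu : R) (c z : X) : 0 < mu -> exists p, A p (c + mu *: (z - p)).
Proof.
move=> mu0; pose A' x w := A x (c + mu *: (w + z)).
have HA' : maximally_monotone ip A'.
  split=> [x u y w h1 h2 | x u H].
  - have := monotoneP HA h1 h2.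
    rewrite opprD addrACA subrr add0r -scalerBr opprD addrACA subrr addr0.
    by rewrite (ipZr Hip) pmulr_rge0.
  - apply: (maximalP HA) => y w Ayw.
    have A'y : A' y (mu^-1 *: (w - c) - z).
      by rewrite /A' subrK scalerA mulfV ?gt_eqF // scale1r addrC subrK.
    have := H _ _ A'y; move: (x - y) => d; rewrite !(ipE Hip) => h.
    have := mulr_ge0 (ltW mu0) h; rewrite mulrBr mulrBr mulrA mulfV ?gt_eqF // mul1r; lra.
have [p Hp] := minty_zero Hip HA'.
by exists p; move: Hp; rewrite /A' (addrC (- p) z).
Qed.

Lemma resolventP x : A (resolvent A x) (x - resolvent A x).
Proof.
apply: (getPex (P := [set p | A p (x - p)])).
by have [p Hp] := minty_shift 0 x ltr01; exists p; move: Hp; rewrite add0r scale1r.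
Qed.

Lemma resolvent_eq x p : A p (x - p) -> resolvent A x = p.
Proof.
move=> Ap; have := monotoneP HA (resolventP x) Ap; move: (resolvent A x) => r.
have -> : x - r - (x - p) = - (r - p) by rewrite opprB addrC addrA subrK opprB.
rewrite (ipNr Hip) (ipxx Hip) oppr_ge0 => h.
by apply/eqP; rewrite -subr_eq0 -normr_eq0 -sqrf_eq0 eq_le h sqr_ge0.
Qed.

Lemma resolvent_firm x y :
  `|resolvent A x - resolvent A y| ^+ 2 <= ip (resolvent A x - resolvent A y) (x - y).
Proof.
have := monotoneP HA (resolventP x) (resolventP y).
move: (resolvent A x) (resolvent A y) => p q.
by rewrite -(ipxx Hip) !(ipE Hip); lra.
Qed.

Lemma resolvent_nonexp x y : `|resolvent A x - resolvent A y| <= `|x - y|.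
Proof.
rewrite -(ler_pXn2r (n := 2)) ?nnegrE //.
have := resolvent_firm x y; have := ip_le_sqr_half Hip (resolvent A x - resolvent A y) (x - y).
lra.
Qed.

Lemma nearly_convex_dom : nearly_convex (dom_op A).
Proof.
move=> y1 y2 t [w1 A1] [w2 A2] /andP[t0 t1]; apply/closure_normP => eps eps0.
have -> : (1 - t) *: y1 + t *: y2 = y1 + t *: (y2 - y1).
  by rewrite scalerBl scale1r scalerBr addrAC addrA.
have [D ED] : exists D, D = y2 - y1 by eexists.
rewrite -ED; have {}ED : y2 = y1 + D by rewrite ED addrC subrK.
rewrite {y2}ED in A2.
set c := y1 + t *: D; set W := (1 - t) *: w1 + t *: w2.
set K := t * (1 - t) * (ip D w2 - ip D w1).
have W0 := normr_ge0 W; have K0 := normr_ge0 K.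
set lam := (`|W| + `|K| / eps + 1) / eps.
have lamE : lam * eps = `|W| + `|K| / eps + 1 by rewrite /lam divfK ?gt_eqF.
have lam0 : 0 < lam.
  by rewrite /lam divr_gt0 //; have := divr_ge0 K0 (ltW eps0); lra.
have [p Ap] := minty_shift 0 c lam0; rewrite add0r in Ap.
exists p; split; first by exists (lam *: (c - p)).
have [e Ee] : exists e, e = c - p by eexists.
rewrite -Ee; have {}Ee : p = c - e by rewrite Ee opprB addrC subrK.
rewrite {p}Ee subKr in Ap.
(* weighting monotonicity against (y1, w1) and (y2, w2) by 1 - t and t cancels D *)
have key : lam * `|e| ^+ 2 <= `|e| * `|W| + K.
  have := ip_le_norm_mul Hip e W.
  have t1' : 0 <= 1 - t by rewrite subr_ge0.
  have := mulr_ge0 t1' (monotoneP HA Ap A1).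
  have := mulr_ge0 t0 (monotoneP HA Ap A2).
  by rewrite /c /W /K -(ipxx Hip) !(ipE Hip); nra.
exact: lt_of_quadratic_le eps0 (normr_ge0 e) W0 lamE key.
Qed.

Lemma closure_ran_add (z0 s0 k : X) (sig : R) : A z0 s0 ->
  (forall y, dom_op A y -> ip y k <= sig) -> closure (ran_op A) (s0 + k).
Proof.
move=> Az Hb; apply/closure_normP => eps eps0.
set K := `|sig - ip z0 k| + 1.
have K0 : 0 < K by rewrite /K ltr_wpDl.
set nu := eps ^+ 2 / (2 * K).
have nu0 : 0 < nu by rewrite /nu divr_gt0 ?exprn_gt0 ?mulr_gt0.
have [p Ap] := minty_shift (s0 + k) z0 nu0.
exists (s0 + k + nu *: (z0 - p)); split; first by exists p.
rewrite opprD addrA subrr add0r normrN normrZ gtr0_norm //.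
have bound : nu * `|z0 - p| ^+ 2 <= sig - ip z0 k.
  have := monotoneP HA Ap Az; have := Hb p (ex_intro _ _ Ap).
  by rewrite -(ipxx Hip) !(ipE Hip); nra.
have : (nu * `|z0 - p|) ^+ 2 < eps ^+ 2.
  have -> : eps ^+ 2 = 2 * K * nu by rewrite /nu mulrC divfK // mulf_neq0 // lt0r_neq0.
  rewrite exprMn expr2 -mulrA; have := ler_norm (sig - ip z0 k).
  by have := sqr_ge0 `|z0 - p|; rewrite /K; nra.
rewrite ltr_pXn2r // nnegrE; last exact: ltW.
exact: mulr_ge0 (ltW nu0) (normr_ge0 _).
Qed.

Lemma graph_shift a u v (t : R) : A a u ->
  (forall y, dom_op A y -> 0 <= ip (y - a) v) -> 0 <= t -> A a (u - t *: v).
Proof.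
move=> Aau Hv t0; apply: (maximalP HA) => y w Ayw.
have := monotoneP HA Aau Ayw; have := mulr_ge0 t0 (Hv y (ex_intro _ w Ayw)).
by rewrite !(ipE Hip); lra.
Qed.

End Resolvent.

Definition inv_op {T} (A : T -> set T) : T -> set T := fun x u => A u x.

Lemma inv_op_max_monotone (R : realType) (X : normedModType R) (ip : X -> X -> R)
  (A : X -> set X) : is_inner_product ip -> maximally_monotone ip A ->
  maximally_monotone ip (inv_op A).
Proof.
move=> Hip [mon max]; split=> [x u y w h1 h2 | x u H].
  by rewrite (ipC Hip); exact: mon.
by apply: max => y w Ayw; rewrite (ipC Hip); apply: H.
Qed.

Lemma nearly_convex_ran (R : realType) (X : completeNormedModType R) (ip : X -> X -> R)
  (A : X -> set X) : is_inner_product ip -> maximally_monotone ip A ->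
  nearly_convex (ran_op A).
Proof. by move=> Hip HA; apply: (nearly_convex_dom Hip); apply: inv_op_max_monotone. Qed.

Lemma nonexp_orbit_bounded (R : realType) (X : normedModType R) (F T : X -> X) (x f c : X) :
  (forall a b, `|F a - F b| <= `|a - b|) -> (forall a b, `|T a - T b| <= `|a - b|) ->
  (forall n, F (iter n T f) = c) -> exists M, forall n, `|F (iter n T x)| <= M.
Proof.
move=> Fne Tne Fc; exists (`|x - f| + `|c|) => n.
have orbit : `|iter n T x - iter n T f| <= `|x - f|.
  by elim: n => [|n IH] //=; apply: le_trans (Tne _ _) IH.
have := ler_normD (F (iter n T x) - c) c; rewrite subrK -{1}(Fc n).
by have := Fne (iter n T x) (iter n T f); lra.
Qed.

Section DouglasRachford.
Variables (R : realType) (X : completeNormedModType R) (ip : X -> X -> R).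
Hypothesis Hip : is_inner_product ip.
Variables A B : X -> set X.
Hypotheses (HA : maximally_monotone ip A) (HB : maximally_monotone ip B).

Local Notation T := (DR_op A B).
Local Notation JA := (resolvent A).
Local Notation JB := (resolvent B).
Local Notation RA := (reflected_resolvent A).

Lemma reflected_resolvent_sub x y : RA x - RA y = 2%:R *: (JA x - JA y) - (x - y).
Proof. by rewrite /reflected_resolvent subrBB -scalerBr. Qed.

Lemma reflected_resolvent_nonexp x y : `|RA x - RA y| <= `|x - y|.
Proof.
rewrite -(ler_pXn2r (n := 2)) ?nnegrE // reflected_resolvent_sub.
have := resolvent_firm Hip HA x y; move: (JA x - JA y) (x - y) => u d.
by rewrite -!(ipxx Hip) !(ipE Hip) (ipC Hip d u); lra.
Qed.

Lemma DR_sub x y : T x - T y = (x - y) - (JA x - JA y) + (JB (RA x) - JB (RA y)).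
Proof. by rewrite /DR_op opprD addrACA subrBB. Qed.

Lemma DR_displacement x : x - T x = JA x - JB (RA x).
Proof. by rewrite /DR_op opprD opprB addrA (addrC x) subrK. Qed.

Lemma DR_firm x y :
  `|T x - T y| ^+ 2 + `|(x - T x) - (y - T y)| ^+ 2 <= `|x - y| ^+ 2.
Proof.
rewrite DR_sub !DR_displacement (subrBB (JA x)); apply: (DR_combination_le Hip).
  exact: (resolvent_firm Hip HA).
by rewrite -reflected_resolvent_sub; apply: (resolvent_firm Hip HB).
Qed.

Lemma DR_nonexp x y : `|T x - T y| <= `|x - y|.
Proof.
rewrite -(ler_pXn2r (n := 2)) ?nnegrE //.
by have := DR_firm x y; have := sqr_ge0 `|x - T x - (y - T y)|; lra.
Qed.

(* the displacement of g - v equals v, by firm nonexpansiveness and the minimality of |v| *)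
Lemma DR_step v g : (forall y, `|v| <= `|y - T y|) -> T g = g - v -> T (g - v) = g - v - v.
Proof.
move=> vmin Tg; have := DR_firm g (g - v); have := vmin (g - v).
rewrite Tg subKr; set w := g - v - T (g - v) => vw h.
have -> : T (g - v) = g - v - w by rewrite /w subKr.
suff -> : w = v by [].
have : `|v| ^+ 2 <= `|w| ^+ 2 by rewrite ler_pXn2r ?nnegrE.
move=> vw2; apply/eqP; rewrite eq_sym -subr_eq0 -normr_eq0 -sqrf_eq0 eq_le sqr_ge0 andbT.
lra.
Qed.

Lemma iter_DR_shift v f : (forall y, `|v| <= `|y - T y|) -> T f = f - v ->
  forall n, iter n T f = f - n%:R *: v.
Proof.
move=> vmin Tf; suff H n : T (f - n%:R *: v) = f - n.+1%:R *: v.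
  by elim=> [|n IH]; rewrite ?scale0r ?subr0 //= IH H.
have Sn k : f - k.+1%:R *: v = f - k%:R *: v - v by rewrite mulrSr scalerDl scale1r opprD addrA.
by elim: n => [|n IH]; rewrite ?scale0r ?subr0 ?Tf ?scale1r // Sn DR_step // -Sn.
Qed.

Lemma DR_shift_resolvent v g : T g = g - v -> JB (RA g) = JA g - v.
Proof.
move=> Tg; have := DR_displacement g; rewrite Tg subKr => ->.
by rewrite opprB addrC subrK.
Qed.

End DouglasRachford.

Section MinimalDisplacement.
Variables (R : realType) (X : completeNormedModType R) (ip : X -> X -> R).
Hypothesis Hip : is_inner_product ip.
Variables A B : X -> set X.
Hypotheses (HA : maximally_monotone ip A) (HB : maximally_monotone ip B).

Local Notation T := (DR_op A B).
Local Notation JA := (resolvent A).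
Local Notation D := (set_sub (dom_op A) (dom_op B)).
Local Notation Rsum := (set_add (ran_op A) (ran_op B)).

Lemma nearly_convex_dom_diff : nearly_convex D.
Proof. exact: nearly_convex_set_sub (nearly_convex_dom Hip HA) (nearly_convex_dom Hip HB). Qed.

Lemma nearly_convex_ran_sum : nearly_convex Rsum.
Proof. exact: nearly_convex_set_add (nearly_convex_ran Hip HA) (nearly_convex_ran Hip HB). Qed.

Lemma dom_diff_neq0 : D !=set0.
Proof.
have [y [w Ayw]] := graph_neq0 HA; have [z [s Bzs]] := graph_neq0 HB.
by exists (y - z), y, z; split; [exists w | split; first exists s].
Qed.

Lemma ran_sum_neq0 : Rsum !=set0.
Proof.
have [y [w Ayw]] := graph_neq0 HA; have [z [s Bzs]] := graph_neq0 HB.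
by exists (w + s), w, s; split; [exists y | split; first exists z].
Qed.

(* <z, vD> is bounded above on dom B, so ran B + vD stays in the closure of ran B *)
Lemma closure_ran_sum_min_norm vD : min_norm_in (closure D) vD -> closure Rsum 0 ->
  closure Rsum vD.
Proof.
move=> mvD R0; rewrite -[vD]add0r; apply: closure_addr R0 => _ [a [s [Aa [[z Bzs] ->]]]].
have [y0 [w0 Ay0]] := graph_neq0 HA.
rewrite -addrA; apply: closure_set_add; first exact: subset_closure.
apply: (closure_ran_add Hip HB (sig := ip y0 vD - `|vD| ^+ 2) Bzs) => z' [s' Bz's'].
have D_y0z' : D (y0 - z') by exists y0, z'; split; [exists w0 | split; first exists s'].
have := min_norm_ip_ge0 Hip nearly_convex_dom_diff mvD (subset_closure D_y0z').
by rewrite !(ipE Hip) (ipxx Hip) (ipC Hip vD y0) (ipC Hip vD z'); lra.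
Qed.

Section Displacement.
Hypothesis Hran : closure (range (fun y => y - T y)) = closure (D `&` Rsum).
Hypothesis Hran' : closure (D `&` Rsum) = closure D `&` closure Rsum.

Lemma min_norm_displacement vD : min_norm_in (closure D) vD -> closure Rsum vD ->
  min_norm_in (closure (range (fun y => y - T y))) vD.
Proof.
by move=> [DvD vDmin] RvD; rewrite Hran Hran'; split=> // y [Dy _]; apply: vDmin.
Qed.

Lemma nearest_proj_displacement vD : min_norm_in (closure D) vD -> closure Rsum vD ->
  nearest_proj (closure (range (fun y => y - T y))) 0 = vD.
Proof.
move=> mvD RvD; have mC := min_norm_displacement mvD RvD.
have [vC vmin] := nearest_proj0_min_norm mC.
have [Dv _] : (closure D `&` closure Rsum) (nearest_proj (closure (range (fun y => y - T y))) 0).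
  by rewrite -Hran' -Hran.
exact: (min_norm_unique Hip nearly_convex_dom_diff mvD Dv (vmin _ mC.1)).
Qed.

End Displacement.

Lemma resolvent_shift_min_norm v f : min_norm_in (closure D) v -> T f = f - v ->
  forall n : nat, JA (f - n%:R *: v) = JA f.
Proof.
move=> mv Tf n; apply: (resolvent_eq Hip HA); rewrite addrAC.
apply: (graph_shift Hip HA (resolventP Hip HA f)) (ler0n _ n) => y [w Ayw].
have Bb : dom_op B (JA f - v).
  by rewrite -(DR_shift_resolvent Tf); eexists; apply: (resolventP Hip HB).
have D_y : D (y - (JA f - v)) by exists y, (JA f - v); split; [exists w | split].
have := min_norm_ip_ge0 Hip nearly_convex_dom_diff mv (subset_closure D_y).
by rewrite opprB addrA addrAC addrK (ipC Hip).
Qed.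

End MinimalDisplacement.

Unset Implicit Arguments.

Theorem corollary5p7 (R : realType) (X : completeNormedModType R)
  (ip : X -> X -> R) (Hip : is_inner_product ip)
  (A B : X -> set X)
  (HA : maximally_monotone ip A) (HB : maximally_monotone ip B)
  (Hran : closure (range (fun y => y - DR_op A B y))
          = closure (set_sub (dom_op A) (dom_op B)
                     `&` set_add (ran_op A) (ran_op B)))
  (Hran' : closure (set_sub (dom_op A) (dom_op B)
                     `&` set_add (ran_op A) (ran_op B))
           = closure (set_sub (dom_op A) (dom_op B))
             `&` closure (set_add (ran_op A) (ran_op B)))
  (HvR : nearest_proj (closure (set_add (ran_op A) (ran_op B))) (0 : X) = 0)
  (f : X)
  (Hf : f = nearest_proj (closure (range (fun y => y - DR_op A B y))) (0 : X) + DR_op A B f)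
  (x : X) :
  let T := DR_op A B in
  let vD := nearest_proj (closure (set_sub (dom_op A) (dom_op B))) (0 : X) in
  [/\ forall n : nat,
        resolvent A (iter n T f) = resolvent A (f - n%:R *: vD) /\
        resolvent A (f - n%:R *: vD) = resolvent A f,
      exists M : R, forall n : nat, `|resolvent A (iter n T x)| <= M &
      exists M : R, forall n : nat,
        `|resolvent B (reflected_resolvent A (iter n T x))| <= M].
Proof.
move=> T vD.
have mvD : min_norm_in (closure (set_sub (dom_op A) (dom_op B))) vD.
  exact (min_norm_nearest_proj0 Hip (dom_diff_neq0 HA HB) (nearly_convex_dom_diff Hip HA HB)).
have RvD : closure (set_add (ran_op A) (ran_op B)) vD.
  apply: (closure_ran_sum_min_norm Hip HA HB mvD); rewrite -HvR.
  exact: (min_norm_nearest_proj0 Hip (ran_sum_neq0 HA HB) (nearly_convex_ran_sum Hip HA HB)).1.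
have vmin y : `|vD| <= `|y - T y|.
  by apply: (min_norm_displacement Hran Hran' mvD RvD).2; apply: subset_closure; exists y.
rewrite (nearest_proj_displacement Hip HA HB Hran Hran' mvD RvD) in Hf.
have Tf : T f = f - vD by rewrite {2}Hf addrC addKr.
have orbitE := iter_DR_shift Hip HA HB vmin Tf.
have JAE := resolvent_shift_min_norm Hip HA HB mvD Tf.
split=> [n | |]; first by rewrite orbitE JAE.
  apply (nonexp_orbit_bounded x (f := f) (c := resolvent A f) (resolvent_nonexp Hip HA)
    (DR_nonexp Hip HA HB)).
  by move=> n; rewrite orbitE JAE.
apply (nonexp_orbit_bounded (F := fun y => resolvent B (reflected_resolvent A y))
    x (f := f) (c := resolvent A f - vD)) => [a b | | n].
  exact: le_trans (resolvent_nonexp Hip HB _ _) (reflected_resolvent_nonexp Hip HA _ _).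
  exact (DR_nonexp Hip HA HB).
rewrite (DR_shift_resolvent (v := vD)) ?orbitE ?JAE //.
by rewrite -orbitE -iterS !orbitE mulrSr scalerDl scale1r opprD addrA.
Qed.
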